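(* Let $G$ be an upward planar digraph with a fixed upward planar embedding and let $(s_1,t_1),\dots,(s_k,t_k)$ be pairs of vertices. Let $\mathcal{P}$ be a set of pairwise disjoint directed paths connecting $(s_i,t_i)$ for all $i$. Let $P\in\mathcal{P}$ be the path connecting $s_i$ and $t_i$, for some $i$, and suppose $P$ is maximal with respect to $\prec^*_{\mathcal{P}}$. Let $P'$ be the right-most $s_i$-$t_i$ path in $G$. Then $(\mathcal{P}\setminus\{P\})\cup\{P'\}$ is also a valid solution to the disjoint paths problem on $G$ and $(s_1,t_1),\dots,(s_k,t_k)$, i.e. it is a set of pairwise disjoint paths linking $s_j$ to $t_j$ for every $j$.
   Context: An upward planar embedding of a digraph is a plane drawing (no edge crossings) in which every directed edge is a curve monotone increasing in the $y$-direction from tail to head. A path is identified with the set of points of $\mathbb{R}^2$ in its drawing. For a path $P$ with endpoints $(x,y)$, $(x',y')$, $y\le y'$, let $\mathrm{Right}(P):=\{(u,v)\in\mathbb{R}^2: y\le v\le y',\ u'<u \text{ for all } u' \text{ with } (u',v)\in P\}$. A point $p\notin P$ is to the right of $P$ if $p\in\mathrm{Right}(P)$. For disjoint paths $P,Q$, write $Q\prec P$ if some point of $P$ is to the right of $Q$; $\prec^*_{\mathcal{P}}$ is the transitive closure of $\prec$ restricted to the paths in $\mathcal{P}$ (a partial order). A right-most $s$-$t$ path is a directed $s$-$t$ path $P$ such that for all directed $s$-$t$ paths $P'$, $P\subseteq P'\cup\mathrm{Right}(P')$. *)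

From HB Require Import structures.
From mathcomp Require Import all_boot all_order all_algebra.
From mathcomp Require Import all_classical all_reals all_analysis.
From Stdlib Require Export Relations.
Set Implicit Arguments. Unset Strict Implicit. Unset Printing Implicit Defensive.
Import Order.TTheory GRing.Theory Num.Theory.
Import numFieldNormedType.Exports.
Local Open Scope classical_set_scope.
Local Open Scope ring_scope.

Section UpwardPlanar.
Context (R : realType) (V E : finType) (tl hd : E -> V).
(* A drawing: vertex positions [pos] and, for each edge e, a curve
   [c e] parametrised on [0,1]. *)
Context (pos : V -> R * R) (c : E -> R -> R * R).

Definition upward_planar_embedding : Prop :=
  injective pos /\
  [/\       (forall e, {within [set a : R | 0 <= a <= 1], continuous (c e)}),
      (forall e, c e 0 = pos (tl e) /\ c e 1 = pos (hd e)),
      (forall e a b, 0 <= a -> a < b -> b <= 1 -> (c e a).2 < (c e b).2),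
      (forall e e' a b, e != e' -> 0 <= a <= 1 -> 0 <= b <= 1 ->
        c e a = c e' b -> (a == 0) || (a == 1))
    & (forall e v a, 0 < a < 1 -> c e a != pos v)].

(* A directed path: a start vertex together with a sequence of edges, each
   starting where the previous one ends. *)
Definition dpath := (V * seq E)%type.

Fixpoint is_walk (v : V) (es : seq E) : bool :=
  if es is e :: es' then (tl e == v) && is_walk (hd e) es' else true.

Definition pend (p : dpath) : V := last p.1 (map hd p.2).

Definition is_path (s t : V) (p : dpath) : Prop :=
  [/\ p.1 = s, is_walk p.1 p.2 & pend p = t].

Definition pts (p : dpath) : set (R * R) :=
  [set z | z = pos p.1 \/
           exists e a, e \in p.2 /\ 0 <= a <= 1 /\ z = c e a].

Definition Right (p : dpath) : set (R * R) :=
  [set z | (pos p.1).2 <= z.2 <= (pos (pend p)).2 /\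
           forall u', pts p (u', z.2) -> u' < z.1].

Definition to_right (z : R * R) (p : dpath) : Prop := Right p z /\ ~ pts p z.

Definition pdisjoint (p q : dpath) : Prop := pts p `&` pts q = set0.

Definition prec (q p : dpath) : Prop :=
  pdisjoint q p /\ exists z, pts p z /\ to_right z q.

Definition rightmost (s t : V) (p : dpath) : Prop :=
  is_path s t p /\
  forall p', is_path s t p' -> pts p `<=` (pts p' `|` Right p').

End UpwardPlanar.

From HB Require Import structures.
From mathcomp Require Import all_boot all_order all_algebra.
From mathcomp Require Import all_classical all_reals all_analysis.
From Stdlib Require Import Relations.
Local Open Scope classical_set_scope.

(* Every point of the right-most path P' lies on P or to the right of P.
   A point of P' on another path Q of the solution cannot lie on P, since P
   and Q are disjoint; so it lies to the right of P, i.e. P precedes Q,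
   which contradicts the maximality of P. *)

Section RightmostReplacement.
Variables (R : realType) (V E : finType) (tl hd : E -> V).
Variables (pos : V -> R * R) (c : E -> R -> R * R).

Lemma pdisjointC p q : pdisjoint pos c p q -> pdisjoint pos c q p.
Proof. by rewrite /pdisjoint setIC. Qed.

Lemma pdisjoint_pts p q z : pdisjoint pos c p q -> pts pos c p z -> ~ pts pos c q z.
Proof.
move=> dpq pz qz.
by have : (pts pos c p `&` pts pos c q) z by []; rewrite dpq.
Qed.

Lemma pdisjoint_rightmost s t p p' q :
  is_path tl hd s t p -> rightmost tl hd pos c s t p' ->
  pdisjoint pos c p q -> ~ prec hd pos c p q -> pdisjoint pos c p' q.
Proof.
move=> path_p [_ rm_p'] dpq not_pq.
apply/seteqP; split => z //= [p'z qz].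
have [pz|Rz] := rm_p' p path_p z p'z; first exact: pdisjoint_pts dpq pz qz.
apply: not_pq; split => //; exists z; split => //; split => // pz.
exact: pdisjoint_pts dpq pz qz.
Qed.

End RightmostReplacement.

Theorem lemma11 (R : realType) (V E : finType) (tl hd : E -> V)
  (pos : V -> R * R) (c : E -> R -> R * R)
  (k : nat) (s t : 'I_k -> V) (P : 'I_k -> dpath V E) (i : 'I_k)
  (P' : dpath V E) :
  upward_planar_embedding tl hd pos c ->
  (forall j, is_path tl hd (s j) (t j) (P j)) ->
  (forall j j', j != j' -> pdisjoint pos c (P j) (P j')) ->
  (forall j, j != i ->
     ~ clos_trans 'I_k (fun a b => prec hd pos c (P a) (P b)) i j) ->
  rightmost tl hd pos c (s i) (t i) P' ->
  (forall j, is_path tl hd (s j) (t j) (if j == i then P' else P j)) /\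
  (forall j j', j != j' ->
     pdisjoint pos c (if j == i then P' else P j)
                     (if j' == i then P' else P j')).
Proof.
move=> _ paths disj maxP rmP'.
have disjP' j : j != i -> pdisjoint pos c P' (P j).
  move=> ji; apply: pdisjoint_rightmost (paths i) rmP' _ _.
    by apply: disj; rewrite eq_sym.
  by move=> prec_ij; apply: (maxP j ji); apply: t_step.
split=> [j|j j' jj'].
  by case: eqP => [->|_]; [case: rmP'|].
case: (eqVneq j i) => [ji|ji]; case: (eqVneq j' i) => [j'i|j'i].
- by rewrite ji j'i eqxx in jj'.
- exact: disjP'.
- exact/pdisjointC/disjP'.
- exact: disj.
Qed.
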